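(* (1) If $\Sigma;\Gamma\vdash\tau:m$ and $\tau$ contains no equality guard, then there exists a context $\Gamma_{\min}$ (over the same variables as $\Gamma$) with $\Sigma;\Gamma_{\min}\vdash\tau:m$ and $\Gamma_{\min}\le\Gamma'$ for every context $\Gamma'$ over those variables with $\Sigma;\Gamma'\vdash\tau:m$. (2) If $\Sigma_0\vdash\sigma\dashv\Sigma$ where the definition block $\sigma$ contains no equality guard, then there exists a minimal signature $\Sigma_{\min}$ such that $\Sigma_0\vdash\sigma\dashv\Sigma_{\min}$, i.e. for every $\Sigma'$ with $\Sigma_0\vdash\sigma\dashv\Sigma'$, each parameter mode in $\Sigma_{\min}$ is $\le$ the corresponding parameter mode in $\Sigma'$.
   Context: Type expressions: $\tau,\kappa ::= \alpha \mid \mathsf{float}\mid\mathsf{int}\mid\mathsf{bool}\mid t(\tau_1,\dots,\tau_n)\mid \tau\to\kappa\mid \tau_1\times\dots\times\tau_n\mid \forall\alpha.\tau\mid\exists\alpha.\tau\mid (\tau \text{ with } \kappa_1=\kappa_2)$ (equality guard). Datatypes: $A ::= C_1\text{ of }\tau_1\mid\dots\mid C_n\text{ of }\tau_n$ (boxed variant) $\mid C\text{ of }\tau$ [unboxed] $\mid \{l_1:\tau_1;\dots;l_n:\tau_n\}$ (boxed record, fields possibly mutable) $\mid \{l:\tau\}$ [unboxed] $\mid \tau$ (type synonym). A definition block $\sigma$ is a list of mutually recursive definitions $t_i(\vec\alpha_i):=A_i$, $1\le i\le n$. Modes $\mathsf{Ind}<\mathsf{Sep}<\mathsf{Deepsep}$;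 composition $\mathsf{Ind}\circ m=\mathsf{Ind}$, $\mathsf{Sep}\circ m=m$, $\mathsf{Deepsep}\circ m=\mathsf{Deepsep}$. Contexts $\Gamma=\alpha_1:m_1,\dots$ ordered pointwise (same variables). A mode signature $\Sigma$ is a list of entries $t(\alpha_1:m_1,\dots,\alpha_n:m_n)$. Type-level judgment $\Sigma;\Gamma\vdash\tau:m$: (variable) $(\alpha:m)\in\Gamma$ gives $\alpha:m$; (constructor) $t(\alpha_1:m_1,\dots,\alpha_n:m_n)\in\Sigma$ and $\tau_i:m\circ m_i$ for all $i$ give $t(\tau_1,\dots,\tau_n):m$; (arrow) $\tau:m\circ\mathsf{Ind}$, $\kappa:m\circ\mathsf{Ind}$ give $\tau\to\kappa:m$; (product) $\tau_i:m\circ\mathsf{Ind}$ for all $i$ gives $\tau_1\times\dots\times\tau_n:m$; (forall) $\Sigma;\Gamma,\alpha:n\vdash\tau:m$ for some $n$ gives $\Sigma;\Gamma\vdash\forall\alpha.\tau:m$; (exists) $\Sigma;\Gamma,\alpha:\mathsf{Ind}\vdash\tau:m$ gives $\Sigma;\Gamma\vdash\exists\alpha.\tau:m$; (conversion) $\tau:m$ and $m\ge n$ give $\tau:n$; (guard) if for every $\Gamma'\ge\Gamma$ with $\Sigma;\Gamma'\vdash\kappa_1=\kappa_2$ we have $\Sigma;\Gamma'\vdash\tau:m$, then $\Sigma;\Gamma\vdash(\tau\text{ with }\kappa_1=\kappa_2):m$, where $\Sigma;\Gamma\vdash\tau_1=\tau_2$ means for all $m$, $\Sigma;\Gamma\vdash\tau_1:m\iff\Sigma;\Gamma\vdash\tau_2:m$.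 Datatype judgment $\Sigma;\Gamma\vdash_{\mathsf{decl}}A$: boxed variants and boxed records are always accepted; an unboxed variant $C\text{ of }\tau$, an unboxed record $\{l:\tau\}$, or a type synonym $\tau$ is accepted iff $\Sigma;\Gamma\vdash\tau:\mathsf{Sep}$. Block judgment: $\Sigma_0\vdash(t_i(\vec\alpha_i):=A_i)_{1\le i\le n}\dashv\Sigma_{\mathsf{block}}$ holds when $\Sigma_{\mathsf{block}}=t_1(\vec{\alpha_1}:\vec{m_1}),\dots,t_n(\vec{\alpha_n}:\vec{m_n})$ for some modes $\vec{m_i}$ and, for each $i$, $\Sigma_0,\Sigma_{\mathsf{block}};\vec{\alpha_i}:\vec{m_i}\vdash_{\mathsf{decl}}A_i$. *)

From Stdlib Require Import List.
Import ListNotations.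

Inductive mode := Ind | Sep | Deepsep.

Definition mode_rank (m : mode) : nat :=
  match m with Ind => 0 | Sep => 1 | Deepsep => 2 end.

Definition mode_le (m n : mode) : Prop := mode_rank m <= mode_rank n.

Definition mode_comp (m n : mode) : mode :=
  match m with Ind => Ind | Sep => n | Deepsep => Deepsep end.

Definition tname := nat.

(** Variables use de Bruijn LEVELS: [TVar k] is the k-th
    variable of the (ordered) context; a binder [TForall]/[TExists] binds the
    variable at level [length Γ] (i.e. it is appended at the end of Γ). *)
Inductive ty : Type :=
| TVar (k : nat)
| TFloat
| TInt
| TBool
| TCon (t : tname) (args : list ty)
| TArrow (a b : ty)
| TProd (ts : list ty)
| TForall (body : ty)
| TExists (body : ty)
| TGuard (body k1 k2 : ty).   (* (body with k1 = k2) *)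

Definition ctx := list mode.
Definition signature := list (tname * list mode).

Definition ctx_le (G1 G2 : ctx) : Prop := Forall2 mode_le G1 G2.

(** Because the guard rule mentions the judgment
    negatively, it is defined by structural recursion on τ.  Each case reads:
    "some structural rule concludes τ : m' for some m' >= m" (the conversion
    rule, which is transitive, applied at the root). *)
Fixpoint has_mode (S : signature) (G : ctx) (t : ty) (m : mode) {struct t} : Prop :=
  exists m', mode_le m m' /\
  match t with
  | TVar k => nth_error G k = Some m'
  | TFloat | TInt | TBool => False   (* no rule in the given system *)
  | TCon c args =>
      exists ms, In (c, ms) S /\
      (fix go (l : list ty) (ms : list mode) {struct l} : Prop :=
         match l, ms with
         | [], [] => True
         | a :: l', mi :: ms' => has_mode S G a (mode_comp m' mi) /\ go l' ms'
         | _, _ => False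
         end) args ms
  | TArrow a b =>
      has_mode S G a (mode_comp m' Ind) /\ has_mode S G b (mode_comp m' Ind)
  | TProd ts =>
      (fix go (l : list ty) {struct l} : Prop :=
         match l with
         | [] => True
         | a :: l' => has_mode S G a (mode_comp m' Ind) /\ go l'
         end) ts
  | TForall body => exists n, has_mode S (G ++ [n]) body m'
  | TExists body => has_mode S (G ++ [Ind]) body m'
  | TGuard body k1 k2 =>
      forall G', ctx_le G G' ->
        (forall n, has_mode S G' k1 n <-> has_mode S G' k2 n) ->
        has_mode S G' body m'
  end.

Fixpoint no_guard (t : ty) : Prop :=
  match t with
  | TVar _ | TFloat | TInt | TBool => True
  | TCon _ args =>
      (fix go (l : list ty) : Prop :=
         match l with [] => True | a :: l' => no_guard a /\ go l' end) args
  | TArrow a b => no_guard a /\ no_guard b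
  | TProd ts =>
      (fix go (l : list ty) : Prop :=
         match l with [] => True | a :: l' => no_guard a /\ go l' end) ts
  | TForall b | TExists b => no_guard b
  | TGuard _ _ _ => False
  end.

Inductive datatype : Type :=
| DVariant (cs : list (nat * ty))
| DVariantUnboxed (c : nat) (t : ty)
| DRecord (fields : list (nat * bool * ty))       (* boxed record; bool = mutable *)
| DRecordUnboxed (l : nat) (t : ty)
| DSynonym (t : ty).

Definition decl_ok (S : signature) (G : ctx) (A : datatype) : Prop :=
  match A with
  | DVariant _ | DRecord _ => True
  | DVariantUnboxed _ t | DRecordUnboxed _ t | DSynonym t => has_mode S G t Sep
  end.

Definition datatype_no_guard (A : datatype) : Prop :=
  match A with
  | DVariant cs => forall c t, In (c, t) cs -> no_guard t
  | DRecord fs => forall l b t, In (l, b, t) fs -> no_guard t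
  | DVariantUnboxed _ t | DRecordUnboxed _ t | DSynonym t => no_guard t
  end.

(** A definition block: entries t_i(α_i1..α_ik) := A_i, given as
    (t_i, k = number of parameters, A_i); the parameters are the context
    variables at levels 0..k-1. *)
Definition block := list (tname * nat * datatype).

Definition block_no_guard (sg : block) : Prop :=
  forall t k A, In (t, k, A) sg -> datatype_no_guard A.

Definition block_judg (S0 : signature) (sg : block) (Sb : signature) : Prop :=
  Forall2 (fun (d : tname * nat * datatype) (e : tname * list mode) =>
             fst e = fst (fst d) /\ length (snd e) = snd (fst d) /\
             decl_ok (S0 ++ Sb) (snd e) (snd d))
          sg Sb.

Definition sig_le (S1 S2 : signature) : Prop :=
  Forall2 (fun e1 e2 : tname * list mode =>
             fst e1 = fst e2 /\ Forall2 mode_le (snd e1) (snd e2)) S1 S2.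

(** A guard-free type has no negative occurrence of the judgment, so the
    judgment is antitone in the signature.  It is also preserved by the
    pointwise meet of two contexts: every rule is upward closed, mode
    composition is monotone in both arguments, and since constructor names are
    distinct in the signature, two derivations of [t(τ1, ..., τn)] use the same
    parameter modes.  With antitonicity, the signatures accepted for a block are
    closed under meet as well.  Modes form a finite chain, so a nonempty
    meet-closed family has a least element: meeting a candidate with a member
    it is not below strictly lowers its sum of mode ranks. *)
From Stdlib Require Import List Lia Wf_nat Classical.
Import ListNotations.

Definition mode_meet (a b : mode) : mode :=
  if Nat.leb (mode_rank a) (mode_rank b) then a else b.

Ltac mode_cases :=
  repeat match goal with m : mode |- _ => destruct m end;
  unfold mode_le, mode_meet, mode_comp, mode_rank in *; simpl in *; lia.

Lemma mode_le_refl a : mode_le a a. Proof. mode_cases. Qed.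

Lemma mode_le_trans a b c : mode_le a b -> mode_le b c -> mode_le a c.
Proof. mode_cases. Qed.

Lemma mode_comp_le_l m a b : mode_le a b -> mode_le (mode_comp a m) (mode_comp b m).
Proof. mode_cases. Qed.

Lemma mode_comp_le_r m a b : mode_le a b -> mode_le (mode_comp m a) (mode_comp m b).
Proof. mode_cases. Qed.

Lemma mode_meet_le_l a b : mode_le (mode_meet a b) a. Proof. mode_cases. Qed.

Lemma mode_meet_le_r a b : mode_le (mode_meet a b) b. Proof. mode_cases. Qed.

Lemma mode_meet_glb m a b : mode_le m a -> mode_le m b -> mode_le m (mode_meet a b).
Proof. mode_cases. Qed.

Lemma mode_meet_lt a b : ~ mode_le a b -> mode_rank (mode_meet a b) < mode_rank a.
Proof. mode_cases. Qed.

Lemma Forall2_and {A B} (R1 R2 : A -> B -> Prop) l l' :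
  Forall2 R1 l l' -> Forall2 R2 l l' -> Forall2 (fun a b => R1 a b /\ R2 a b) l l'.
Proof. intros H1; induction H1; inversion 1; subst; constructor; auto. Qed.

Lemma Forall2_Forall_impl {A B} (P : A -> Prop) (R1 R2 : A -> B -> Prop) l l' :
  (forall a b, P a -> R1 a b -> R2 a b) ->
  Forall P l -> Forall2 R1 l l' -> Forall2 R2 l l'.
Proof. intros HR HP H; induction H; inversion HP; subst; constructor; auto. Qed.

Lemma Forall2_common_l {A B C} (R : A -> B -> Prop) (Q : A -> C -> Prop)
    (T : B -> C -> Prop) l lb lc :
  (forall a b c, R a b -> Q a c -> T b c) ->
  Forall2 R l lb -> Forall2 Q l lc -> Forall2 T lb lc.
Proof.
  intros HT H; revert lc; induction H; inversion 1; subst; constructor; eauto.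
Qed.

Lemma NoDup_map_fst_In_eq {A B} (l : list (A * B)) a b1 b2 :
  NoDup (map fst l) -> In (a, b1) l -> In (a, b2) l -> b1 = b2.
Proof.
  induction l as [|[a' b'] l IH]; cbn; [tauto|].
  inversion 1 as [|? ? Hnotin Hnd]; subst.
  assert (Hfresh : forall b, ~ In (a', b) l)
    by (intros b Hin; apply Hnotin, in_map_iff; exists (a', b); auto).
  intros [E1|H1] [E2|H2].
  - congruence.
  - injection E1 as -> _. destruct (Hfresh _ H2).
  - injection E2 as -> _. destruct (Hfresh _ H1).
  - exact (IH Hnd H1 H2).
Qed.

Definition ty_nested_ind (P : ty -> Prop)
  (HV : forall k, P (TVar k)) (HF : P TFloat) (HI : P TInt) (HB : P TBool)
  (HC : forall c args, Forall P args -> P (TCon c args))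
  (HA : forall a b, P a -> P b -> P (TArrow a b))
  (HP : forall ts, Forall P ts -> P (TProd ts))
  (HFa : forall b, P b -> P (TForall b)) (HE : forall b, P b -> P (TExists b))
  (HG : forall b k1 k2, P b -> P k1 -> P k2 -> P (TGuard b k1 k2)) :
  forall t, P t :=
  fix F t := match t return P t with
  | TVar k => HV k | TFloat => HF | TInt => HI | TBool => HB
  | TCon c args => HC c args ((fix go (l : list ty) : Forall P l :=
        match l with [] => Forall_nil P | a :: l' => Forall_cons a (F a) (go l') end) args)
  | TArrow a b => HA a b (F a) (F b)
  | TProd ts => HP ts ((fix go (l : list ty) : Forall P l :=
        match l with [] => Forall_nil P | a :: l' => Forall_cons a (F a) (go l') end) ts)
  | TForall b => HFa b (F b) | TExists b => HE b (F b)
  | TGuard b k1 k2 => HG b k1 k2 (F b) (F k1) (F k2) end.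

Lemma no_guard_TCon c args : no_guard (TCon c args) <-> Forall no_guard args.
Proof.
  induction args as [|a args IH]; cbn in *; [split; auto|].
  rewrite Forall_cons_iff, <- IH. reflexivity.
Qed.

Lemma no_guard_TProd ts : no_guard (TProd ts) <-> Forall no_guard ts.
Proof.
  induction ts as [|a ts IH]; cbn in *; [split; auto|].
  rewrite Forall_cons_iff, <- IH. reflexivity.
Qed.

Lemma has_mode_TCon S G c args m : has_mode S G (TCon c args) m <->
  exists m', mode_le m m' /\ exists ms, In (c, ms) S /\
     Forall2 (fun a mi => has_mode S G a (mode_comp m' mi)) args ms.
Proof.
  cbn [has_mode].
  split; intros (m' & Hle & ms & Hin & H); exists m'; split; try exact Hle;
    exists ms; split; try exact Hin; clear Hin; revert ms H;
    induction args as [|a args IH]; intros [|mi ms] H; cbn in *;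
    try solve [tauto | constructor | inversion H].
  - constructor; [tauto | apply IH; tauto].
  - inversion H; subst. split; [assumption | apply IH; assumption].
Qed.

Lemma has_mode_TProd S G ts m : has_mode S G (TProd ts) m <->
  exists m', mode_le m m' /\ Forall (fun a => has_mode S G a (mode_comp m' Ind)) ts.
Proof.
  cbn [has_mode].
  split; intros (m' & Hle & H); exists m'; split; try exact Hle; revert H;
    induction ts as [|a ts IH]; cbn; intro H.
  - constructor.
  - constructor; [tauto | apply IH; tauto].
  - exact I.
  - inversion H; subst. split; [assumption | apply IH; assumption].
Qed.

Lemma has_mode_le S G t m m0 : has_mode S G t m -> mode_le m0 m -> has_mode S G t m0.
Proof.
  destruct t; intros (m' & Hle & H) Hm0; exists m'; split; eauto using mode_le_trans.
Qed.

Definition sig_refines (S S' : signature) : Prop :=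
  forall c ms', In (c, ms') S' -> exists ms, In (c, ms) S /\ ctx_le ms ms'.

Lemma has_mode_sig_refines S S' t G m :
  sig_refines S S' -> no_guard t -> has_mode S' G t m -> has_mode S G t m.
Proof.
  intros HS. revert G m.
  induction t using ty_nested_ind; intros G m Hng Hm.
  - exact Hm.
  - destruct Hm as (? & ? & []).
  - destruct Hm as (? & ? & []).
  - destruct Hm as (? & ? & []).
  - apply has_mode_TCon in Hm as (m' & Hle & ms' & Hin & Hargs).
    apply has_mode_TCon. exists m'; split; [exact Hle|].
    destruct (HS c ms' Hin) as (ms & Hin' & Hms). exists ms; split; [exact Hin'|].
    apply no_guard_TCon in Hng.
    assert (Hargs' : Forall2 (fun a mi => has_mode S G a (mode_comp m' mi)) args ms').
    { refine (Forall2_Forall_impl _ _ _ _ _ _ (Forall_and H Hng) Hargs).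
      intros a mi [IHa Hnga]. exact (IHa _ _ Hnga). }
    apply Forall2_flip in Hargs', Hms.
    refine (Forall2_common_l _ _ _ _ _ _ _ Hargs' Hms).
    intros mi' a mi Ha Hle'. exact (has_mode_le _ _ _ _ _ Ha (mode_comp_le_r _ _ _ Hle')).
  - destruct Hng, Hm as (m' & Hle & Ha & Hb). exists m'; auto.
  - apply has_mode_TProd in Hm as (m' & Hle & Hts). apply has_mode_TProd.
    exists m'; split; [exact Hle|].
    apply no_guard_TProd in Hng.
    induction H; inversion Hts; inversion Hng; subst; constructor; auto.
  - destruct Hm as (m' & Hle & n & Hb). exists m'; split; [exact Hle|]. exists n; auto.
  - destruct Hm as (m' & Hle & Hb). exists m'; auto.
  - destruct Hng.
Qed.

Fixpoint ctx_meet (G1 G2 : ctx) : ctx :=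
  match G1, G2 with
  | a :: G1', b :: G2' => mode_meet a b :: ctx_meet G1' G2'
  | _, _ => []
  end.

Lemma length_ctx_meet G1 G2 : length G1 = length G2 -> length (ctx_meet G1 G2) = length G1.
Proof. revert G2; induction G1; intros [|b G2]; cbn; congruence || auto. Qed.

Lemma nth_error_ctx_meet G1 G2 k a b :
  nth_error G1 k = Some a -> nth_error G2 k = Some b ->
  nth_error (ctx_meet G1 G2) k = Some (mode_meet a b).
Proof.
  revert G2 k; induction G1; intros [|b' G2] [|k]; cbn; congruence || auto.
Qed.

Lemma ctx_meet_app_single G1 G2 a b : length G1 = length G2 ->
  ctx_meet (G1 ++ [a]) (G2 ++ [b]) = ctx_meet G1 G2 ++ [mode_meet a b].
Proof.
  revert G2; induction G1; intros [|b' G2]; cbn; intros; try discriminate; f_equal; auto.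
Qed.

Lemma ctx_le_refl G : ctx_le G G.
Proof. induction G; constructor; auto using mode_le_refl. Qed.

Lemma ctx_meet_le_l G1 G2 : length G1 = length G2 -> ctx_le (ctx_meet G1 G2) G1.
Proof.
  revert G2; induction G1 as [|a G1 IH]; intros [|b G2] Hl; try discriminate; constructor.
  - apply mode_meet_le_l.
  - apply IH; cbn in Hl; congruence.
Qed.

Lemma ctx_meet_le_r G1 G2 : length G1 = length G2 -> ctx_le (ctx_meet G1 G2) G2.
Proof.
  revert G2; induction G1 as [|a G1 IH]; intros [|b G2] Hl; try discriminate; constructor.
  - apply mode_meet_le_r.
  - apply IH; cbn in Hl; congruence.
Qed.

Lemma has_mode_ctx_meet S t : NoDup (map fst S) -> no_guard t ->
  forall G1 G2 m, length G1 = length G2 ->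
  has_mode S G1 t m -> has_mode S G2 t m -> has_mode S (ctx_meet G1 G2) t m.
Proof.
  intros HS.
  induction t using ty_nested_ind; intros Hng G1 G2 m Hl H1 H2.
  - destruct H1 as (a & Ha & E1), H2 as (b & Hb & E2).
    exists (mode_meet a b); split; auto using mode_meet_glb, nth_error_ctx_meet.
  - destruct H1 as (? & ? & []).
  - destruct H1 as (? & ? & []).
  - destruct H1 as (? & ? & []).
  - apply has_mode_TCon in H1 as (m1 & Hle1 & ms & Hin1 & Hargs1).
    apply has_mode_TCon in H2 as (m2 & Hle2 & ms2 & Hin2 & Hargs2).
    rewrite <- (NoDup_map_fst_In_eq _ _ _ _ HS Hin1 Hin2) in Hargs2.
    apply has_mode_TCon. exists m; split; [apply mode_le_refl|].
    exists ms; split; [exact Hin1|].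
    apply no_guard_TCon in Hng.
    refine (Forall2_Forall_impl _ _ _ _ _ _ (Forall_and H Hng) (Forall2_and _ _ _ _ Hargs1 Hargs2)).
    intros a mi [IHa Hnga] [Ha1 Ha2].
    apply IHa; eauto using has_mode_le, mode_comp_le_l.
  - destruct Hng, H1 as (m1 & Hle1 & Ha1 & Hb1), H2 as (m2 & Hle2 & Ha2 & Hb2).
    exists m; split; [apply mode_le_refl|].
    split; [apply IHt1 | apply IHt2]; eauto using has_mode_le, mode_comp_le_l.
  - apply has_mode_TProd in H1 as (m1 & Hle1 & Hts1).
    apply has_mode_TProd in H2 as (m2 & Hle2 & Hts2).
    apply has_mode_TProd. exists m; split; [apply mode_le_refl|].
    apply no_guard_TProd in Hng.
    induction H; inversion Hts1; inversion Hts2; inversion Hng; subst; constructor; auto.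
    apply H; eauto using has_mode_le, mode_comp_le_l.
  - destruct H1 as (m1 & Hle1 & n1 & Hb1), H2 as (m2 & Hle2 & n2 & Hb2).
    exists m; split; [apply mode_le_refl|]. exists (mode_meet n1 n2).
    rewrite <- ctx_meet_app_single by exact Hl.
    apply IHt; eauto using has_mode_le.
    rewrite !length_app; cbn; congruence.
  - destruct H1 as (m1 & Hle1 & Hb1), H2 as (m2 & Hle2 & Hb2).
    exists m; split; [apply mode_le_refl|].
    change (ctx_meet G1 G2 ++ [Ind]) with (ctx_meet G1 G2 ++ [mode_meet Ind Ind]).
    rewrite <- ctx_meet_app_single by exact Hl.
    apply IHt; eauto using has_mode_le.
    rewrite !length_app; cbn; congruence.
  - destruct Hng.
Qed.

Lemma meet_closed_has_least {A} (le : A -> A -> Prop) (meet : A -> A -> A)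
    (size : A -> nat) (P : A -> Prop) :
  (forall a b, P a -> P b -> P (meet a b)) ->
  (forall a b, P a -> P b -> ~ le a b -> size (meet a b) < size a) ->
  forall a, P a -> exists a0, P a0 /\ forall b, P b -> le a0 b.
Proof.
  intros Hmeet Hsize a.
  induction a as [a IH] using (induction_ltof1 _ size).
  intros Pa.
  destruct (classic (forall b, P b -> le a b)) as [Hleast|Hnot]; [eauto|].
  apply not_all_ex_not in Hnot as [b Hb]. apply imply_to_and in Hb as [Pb Hab].
  exact (IH (meet a b) (Hsize a b Pa Pb Hab) (Hmeet a b Pa Pb)).
Qed.

Definition ctx_size (G : ctx) : nat := list_sum (map mode_rank G).

Lemma ctx_size_cons a G : ctx_size (a :: G) = mode_rank a + ctx_size G.
Proof. reflexivity. Qed.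

Lemma ctx_size_meet_le G1 G2 : ctx_size (ctx_meet G1 G2) <= ctx_size G1.
Proof.
  revert G2; induction G1 as [|a G1 IH]; intros [|b G2]; try (cbn; lia).
  cbn [ctx_meet]; rewrite !ctx_size_cons.
  specialize (IH G2). pose proof (mode_meet_le_l a b). unfold mode_le in *. lia.
Qed.

Lemma ctx_size_meet_lt G1 G2 : length G1 = length G2 -> ~ ctx_le G1 G2 ->
  ctx_size (ctx_meet G1 G2) < ctx_size G1.
Proof.
  revert G2; induction G1 as [|a G1 IH]; intros [|b G2] Hl Hnle; try discriminate.
  - destruct Hnle. constructor.
  - cbn [ctx_meet]; rewrite !ctx_size_cons.
    destruct (classic (mode_le a b)) as [Hab|Hab].
    + assert (Hrest : ~ ctx_le G1 G2) by (intro; apply Hnle; constructor; auto).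
      specialize (IH G2 ltac:(cbn in Hl; congruence) Hrest).
      pose proof (mode_meet_le_l a b). unfold mode_le in *. lia.
    + pose proof (mode_meet_lt a b Hab). pose proof (ctx_size_meet_le G1 G2). lia.
Qed.

Theorem least_ctx_has_mode S G t m :
  NoDup (map fst S) -> no_guard t -> has_mode S G t m ->
  exists Gmin, length Gmin = length G /\ has_mode S Gmin t m /\
    forall G', length G' = length G -> has_mode S G' t m -> ctx_le Gmin G'.
Proof.
  intros HS Hng Hm.
  destruct (meet_closed_has_least ctx_le ctx_meet ctx_size
              (fun G' => length G' = length G /\ has_mode S G' t m))
    with (a := G) as (Gmin & [Hl Hmin] & Hleast); auto.
  - intros G1 G2 [Hl1 H1] [Hl2 H2]. split.
    + rewrite length_ctx_meet; congruence.
    + apply has_mode_ctx_meet; auto. congruence.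
  - intros G1 G2 [Hl1 _] [Hl2 _]. apply ctx_size_meet_lt. congruence.
  - exists Gmin. split; [exact Hl | split; [exact Hmin|]].
    intros G' Hl' H'. apply Hleast. auto.
Qed.

Fixpoint sig_meet (S1 S2 : signature) : signature :=
  match S1, S2 with
  | e1 :: S1', e2 :: S2' => (fst e1, ctx_meet (snd e1) (snd e2)) :: sig_meet S1' S2'
  | _, _ => []
  end.

Definition sig_size (S : signature) : nat := list_sum (map (fun e => ctx_size (snd e)) S).

Lemma sig_size_cons e S : sig_size (e :: S) = ctx_size (snd e) + sig_size S.
Proof. reflexivity. Qed.

Definition same_shape (S1 S2 : signature) : Prop :=
  Forall2 (fun e1 e2 => fst e1 = fst e2 /\ length (snd e1) = length (snd e2)) S1 S2.

Lemma sig_size_meet_le S1 S2 : sig_size (sig_meet S1 S2) <= sig_size S1.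
Proof.
  revert S2; induction S1 as [|e1 S1 IH]; intros [|e2 S2]; try (cbn; lia).
  cbn [sig_meet]; rewrite !sig_size_cons.
  specialize (IH S2). pose proof (ctx_size_meet_le (snd e1) (snd e2)). cbn [snd] in *. lia.
Qed.

Lemma sig_size_meet_lt S1 S2 : same_shape S1 S2 -> ~ sig_le S1 S2 ->
  sig_size (sig_meet S1 S2) < sig_size S1.
Proof.
  induction 1 as [|e1 e2 S1 S2 [Hname Hlen] Hshape IH]; intros Hnle.
  - destruct Hnle. constructor.
  - cbn [sig_meet]; rewrite !sig_size_cons; cbn [snd].
    destruct (classic (ctx_le (snd e1) (snd e2))) as [Hle|Hle].
    + assert (Hrest : ~ sig_le S1 S2) by (intro; apply Hnle; constructor; auto).
      pose proof (IH Hrest). pose proof (ctx_size_meet_le (snd e1) (snd e2)). lia.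
    + pose proof (ctx_size_meet_lt _ _ Hlen Hle). pose proof (sig_size_meet_le S1 S2). lia.
Qed.

Lemma map_fst_sig_meet S1 S2 : same_shape S1 S2 -> map fst (sig_meet S1 S2) = map fst S1.
Proof. induction 1; cbn; f_equal; auto. Qed.

Lemma sig_refines_meet_l S1 S2 : same_shape S1 S2 -> sig_refines (sig_meet S1 S2) S1.
Proof.
  induction 1 as [|e1 e2 S1 S2 [Hname Hlen] Hshape IH]; intros c ms' Hin; [destruct Hin|].
  destruct Hin as [E|Hin].
  - subst e1. exists (ctx_meet ms' (snd e2)). split; [left; reflexivity|].
    apply ctx_meet_le_l, Hlen.
  - destruct (IH c ms' Hin) as (ms & Hin' & Hle). exists ms. split; [right|]; assumption.
Qed.

Lemma sig_refines_meet_r S1 S2 : same_shape S1 S2 -> sig_refines (sig_meet S1 S2) S2.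
Proof.
  induction 1 as [|e1 e2 S1 S2 [Hname Hlen] Hshape IH]; intros c ms' Hin; [destruct Hin|].
  destruct Hin as [E|Hin].
  - subst e2. exists (ctx_meet (snd e1) ms'). split; [left; rewrite Hname; reflexivity|].
    apply ctx_meet_le_r, Hlen.
  - destruct (IH c ms' Hin) as (ms & Hin' & Hle). exists ms. split; [right|]; assumption.
Qed.

Lemma sig_refines_app_l S0 S S' : sig_refines S S' -> sig_refines (S0 ++ S) (S0 ++ S').
Proof.
  intros HS c ms' Hin. apply in_app_or in Hin as [Hin|Hin].
  - exists ms'. split; [apply in_or_app; left; exact Hin | apply ctx_le_refl].
  - destruct (HS c ms' Hin) as (ms & Hin' & Hle).
    exists ms. split; [apply in_or_app; right; exact Hin' | exact Hle].
Qed.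

Definition entry_ok (Sx : signature) (d : tname * nat * datatype) (e : tname * list mode)
  : Prop :=
  fst e = fst (fst d) /\ length (snd e) = snd (fst d) /\ decl_ok Sx (snd e) (snd d).

Lemma block_judg_entries S0 sg S : block_judg S0 sg S = Forall2 (entry_ok (S0 ++ S)) sg S.
Proof. reflexivity. Qed.

Lemma block_judg_same_shape S0 sg S1 S2 :
  block_judg S0 sg S1 -> block_judg S0 sg S2 -> same_shape S1 S2.
Proof.
  apply Forall2_common_l. intros d e1 e2 (Hn1 & Hl1 & _) (Hn2 & Hl2 & _). split; congruence.
Qed.

Lemma block_judg_names S0 sg S :
  block_judg S0 sg S -> map fst S = map (fun d => fst (fst d)) sg.
Proof. induction 1 as [|d e sg' S' (Hname & _)]; cbn; f_equal; auto. Qed.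

Lemma decl_ok_ctx_meet Sx S1x S2x A G1 G2 :
  NoDup (map fst Sx) -> datatype_no_guard A ->
  sig_refines Sx S1x -> sig_refines Sx S2x -> length G1 = length G2 ->
  decl_ok S1x G1 A -> decl_ok S2x G2 A -> decl_ok Sx (ctx_meet G1 G2) A.
Proof.
  destruct A; cbn; intros; auto; apply has_mode_ctx_meet; eauto using has_mode_sig_refines.
Qed.

Lemma entries_ok_sig_meet Sx S1x S2x sg S1 S2 :
  NoDup (map fst Sx) -> sig_refines Sx S1x -> sig_refines Sx S2x -> block_no_guard sg ->
  Forall2 (entry_ok S1x) sg S1 -> Forall2 (entry_ok S2x) sg S2 ->
  Forall2 (entry_ok Sx) sg (sig_meet S1 S2).
Proof.
  intros HS H1 H2 Hng Hok1. revert S2.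
  induction Hok1 as [|[[tn k] A] e1 sg S1 (Hn1 & Hl1 & D1) _ IH];
    intros S2 Hok2; inversion Hok2 as [|? e2 ? S2' (Hn2 & Hl2 & D2) Hrest]; subst;
    constructor.
  - unfold entry_ok; cbn.
    assert (Hlen : length (snd e1) = length (snd e2)) by congruence.
    split; [exact Hn1|]. split; [rewrite length_ctx_meet; assumption|].
    apply (decl_ok_ctx_meet Sx S1x S2x); try assumption.
    apply (Hng tn k). left; reflexivity.
  - apply IH; [|exact Hrest]. intros t' k' A' Hin. apply (Hng t' k'). right; exact Hin.
Qed.

Lemma block_judg_meet S0 sg S1 S2 :
  NoDup (map fst S0 ++ map (fun d => fst (fst d)) sg) -> block_no_guard sg ->
  block_judg S0 sg S1 -> block_judg S0 sg S2 -> block_judg S0 sg (sig_meet S1 S2).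
Proof.
  intros Hnd Hng B1 B2.
  pose proof (block_judg_same_shape _ _ _ _ B1 B2) as Hshape.
  rewrite block_judg_entries in *.
  apply entries_ok_sig_meet with (S1x := S0 ++ S1) (S2x := S0 ++ S2); auto.
  - rewrite map_app, map_fst_sig_meet, (block_judg_names _ _ _ B1); assumption.
  - apply sig_refines_app_l, sig_refines_meet_l, Hshape.
  - apply sig_refines_app_l, sig_refines_meet_r, Hshape.
Qed.

Theorem least_block_signature S0 sg S :
  NoDup (map fst S0 ++ map (fun d => fst (fst d)) sg) -> block_no_guard sg ->
  block_judg S0 sg S ->
  exists Smin, block_judg S0 sg Smin /\ forall S', block_judg S0 sg S' -> sig_le Smin S'.
Proof.
  intros Hnd Hng B.
  apply (meet_closed_has_least sig_le sig_meet sig_size (block_judg S0 sg)) with (a := S);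
    [intros; apply block_judg_meet; assumption | | exact B].
  intros S1 S2 B1 B2. apply sig_size_meet_lt, (block_judg_same_shape _ _ _ _ B1 B2).
Qed.

Theorem mainTheorem6 :
  (forall (S : signature) (G : ctx) (t : ty) (m : mode),
      NoDup (map fst S) ->
      no_guard t -> has_mode S G t m ->
      exists Gmin : ctx,
        length Gmin = length G /\ has_mode S Gmin t m /\
        (forall G' : ctx, length G' = length G -> has_mode S G' t m ->
                          ctx_le Gmin G'))
  /\
  (forall (S0 : signature) (sg : block) (S : signature),
      NoDup (map fst S0 ++ map (fun d => fst (fst d)) sg) ->
      block_no_guard sg -> block_judg S0 sg S ->
      exists Smin : signature,
        block_judg S0 sg Smin /\
        (forall S' : signature, block_judg S0 sg S' -> sig_le Smin S')).
Proof.
  split; [exact least_ctx_has_mode | exact least_block_signature].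
Qed.
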